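(* Let $(T,\lambda)$ be an increasing tree. Then $(T,\lambda)$ is left increasing if and only if, for any branchings $b$ and $b'$ of $T$ such that $b$ is to the left of $b'$ and the vertices of $b$ and $b'$ do not lie on a common path connecting a leaf of $T$ with the root of $T$, we have $\lambda(b)<\lambda(b')$.
   Context: A (planar rooted) tree is a finite planar rooted tree in which each vertex has one outgoing edge and at least two incoming edges (ordered left to right), incoming edges being leaves or coming from other vertices; $\varepsilon$ is the trivial tree with no vertex. For $m\ge1$, $\bigvee(T_0,\ldots,T_m)$ joins the roots of $T_0,\ldots,T_m$ to a new vertex with a new root; every non-trivial tree is uniquely such a wedge. A vertex with $j+1$ incoming edges carries $j$ branchings (pairs of consecutive incoming edges); the level $\lambda(b)$ of a branching is the level of its vertex. ''To the left'' refers to the left-to-right order $\preceq$ on branchings defined recursively: for $T=\bigvee(T_0,\ldots,T_m)$ with root branchings $b_1,\ldots,b_m$ ($b_i$ between $T_{i-1}$ and $T_i$), $b_i\prec b\prec b_{i+1}$ for $b$ in $T_i$, branchings of $T_i$ ordered recursively. A level function is a surjection $\lambda$ from vertices onto $[k]$ strictly increasing along each leaf-to-root path; an increasing tree is $(T,\lambda)$. $\mathsf{Inc}$: $\mathsf{Inc}(\varepsilon)=\varepsilon$; if $T=\bigvee(T_0,\ldots,T_m)$ and $\mathsf{Inc}(T_i)=(T_i,\lambda_i)$ with $k_i$ levels, then $\mathsf{Inc}(T)=(T,\lambda)$ with $\lambda(v)=k_0+\cdots+k_{i-1}+\lambda_i(v)$ for vertices $v$ of $T_i$ and root vertex level $k_0+\cdots+k_m+1$.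 An increasing tree is left increasing if it equals $\mathsf{Inc}(T)$ for some tree $T$. *)

From mathcomp Require Import all_boot.
Set Implicit Arguments. Unset Strict Implicit. Unset Printing Implicit Defensive.

(* Planar rooted trees: [Leaf] is a leaf (the trivial tree eps when it is the
   whole tree); [Node [:: T_0; ...; T_m]] is the wedge V(T_0,...,T_m). *)
Inductive tree := Leaf | Node of seq tree.

Fixpoint wf (t : tree) : bool :=
  match t with
  | Leaf => true
  | Node ts => (1 < size ts) &&
      (fix wfs (l : seq tree) := match l with
                                 | [::] => true
                                 | u :: l' => wf u && wfs l' end) ts
  end.

(* Vertices are addressed by paths from the root: [::] is the root, and
   i :: p is the vertex at address p inside the i-th child T_i. *)
Fixpoint vertices (t : tree) : seq (seq nat) :=
  match t with
  | Leaf => [::]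
  | Node ts => [::] ::
      (fix vs (i : nat) (l : seq tree) := match l with
        | [::] => [::]
        | u :: l' => map (cons i) (vertices u) ++ vs i.+1 l' end) 0 ts
  end.

Definition nverts (t : tree) : nat := size (vertices t).

(* Branchings: (v, j) is the branching of vertex v between its (j-1)-th and
   j-th incoming edges, 1 <= j <= m.  They are listed in the left-to-right
   order: branchings of T_0, b_1, branchings of T_1, b_2, ..., branchings of T_m. *)
Fixpoint branchings (t : tree) : seq (seq nat * nat) :=
  match t with
  | Leaf => [::]
  | Node ts =>
      (fix bs (i : nat) (l : seq tree) := match l with
        | [::] => [::]
        | u :: l' => (if i == 0 then [::] else [:: ([::], i)])
                     ++ map (fun b => (i :: b.1, b.2)) (branchings u)
                     ++ bs i.+1 l' end) 0 ts
  end.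

Definition left_of (t : tree) (b b' : seq nat * nat) : bool :=
  [&& b \in branchings t, b' \in branchings t &
      index b (branchings t) < index b' (branchings t)].

Fixpoint inc (t : tree) (p : seq nat) : nat :=
  match p with
  | [::] => nverts t
  | i :: p' => match t with
               | Leaf => 0
               | Node ts => sumn (map nverts (take i ts)) + inc (nth Leaf ts i) p'
               end
  end.

Definition level_function (t : tree) (lam : seq nat -> nat) (k : nat) : Prop :=
  [/\ (forall v, v \in vertices t -> 1 <= lam v <= k),
      (forall l, 1 <= l <= k -> exists2 v, v \in vertices t & lam v = l) &
      (forall v i, v \in vertices t -> rcons v i \in vertices t ->
         lam (rcons v i) < lam v)].

Definition increasing_tree (t : tree) (lam : seq nat -> nat) : Prop :=
  wf t /\ exists k, level_function t lam k.

(* (t, lam) = Inc(t) (lam only matters on vertices of t) *)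
Definition left_increasing (t : tree) (lam : seq nat -> nat) : Prop :=
  forall v, v \in vertices t -> lam v = inc t v.

Definition on_common_path (v w : seq nat) : bool := prefix v w || prefix w v.

From mathcomp Require Import all_boot.
Set Implicit Arguments. Unset Strict Implicit. Unset Printing Implicit Defensive.

(* Inc(T) numbers the vertices of T_0, ..., T_m by consecutive blocks of
   levels, so it increases from left to right on branchings lying on no common
   path.  Conversely, say that w precedes v if w lies strictly below v, or if v
   and w lie on no common path and the leftmost branching of w is to the left
   of that of v.  Distinct vertices are always comparable, and any level
   function lam satisfying the condition is strictly increasing along this
   order; being onto [1, k], lam v is then the number of vertices that are v or
   precede v.  This count does not involve lam, so lam is the level function
   of Inc(T). *)

Fixpoint tree_nth_ind (P : tree -> Prop) (P_Leaf : P Leaf)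
  (P_Node : forall ts, (forall j, P (nth Leaf ts j)) -> P (Node ts)) (t : tree) : P t :=
  match t with
  | Leaf => P_Leaf
  | Node ts => P_Node ts ((fix all_nth (l : seq tree) : forall j, P (nth Leaf l j) :=
      match l return forall j, P (nth Leaf l j) with
      | [::] => fun j => match j return P (nth Leaf [::] j) with 0 => P_Leaf | _.+1 => P_Leaf end
      | u :: l' => fun j => match j return P (nth Leaf (u :: l') j) with
                            | 0 => tree_nth_ind P_Leaf P_Node u
                            | j'.+1 => all_nth l' j' end
      end) ts)
  end.

Fixpoint child_vertices (i : nat) (l : seq tree) : seq (seq nat) :=
  if l is u :: l' then map (cons i) (vertices u) ++ child_vertices i.+1 l' else [::].

Fixpoint child_branchings (i : nat) (l : seq tree) : seq (seq nat * nat) :=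
  if l is u :: l' then
    (if i == 0 then [::] else [:: ([::], i)])
      ++ map (fun b => (i :: b.1, b.2)) (branchings u) ++ child_branchings i.+1 l'
  else [::].

Lemma vertices_Node ts : vertices (Node ts) = [::] :: child_vertices 0 ts.
Proof. by []. Qed.

Lemma branchings_Node ts : branchings (Node ts) = child_branchings 0 ts.
Proof. by []. Qed.

Lemma wf_Node ts : wf (Node ts) = (1 < size ts) && all wf ts.
Proof. by []. Qed.

Lemma mem_child_verticesP i l v : v \in child_vertices i l ->
  exists j p, [/\ j < size l, v = (i + j) :: p & p \in vertices (nth Leaf l j)].
Proof.
elim: l i => [|u l IHl] i //=; rewrite mem_cat => /orP[/mapP[p pu ->]|/IHl[j [p [jl -> pv]]]].
  by exists 0, p; rewrite addn0.
by exists j.+1, p; rewrite addSnnS.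
Qed.

Lemma mem_child_vertices i l j p :
  p \in vertices (nth Leaf l j) -> (i + j) :: p \in child_vertices i l.
Proof.
elim: l i j => [|u l IHl] i [|j] //= pv; rewrite mem_cat.
  by rewrite addn0 map_f.
by rewrite -addSnnS IHl ?orbT.
Qed.

Lemma mem_verticesP ts v : v \in vertices (Node ts) -> v = [::] \/
  exists j p, [/\ j < size ts, v = j :: p & p \in vertices (nth Leaf ts j)].
Proof.
rewrite vertices_Node inE => /orP[/eqP->|/mem_child_verticesP]; first by left.
by right.
Qed.

Lemma mem_vertices_root ts : [::] \in vertices (Node ts).
Proof. by rewrite vertices_Node mem_head. Qed.

Lemma mem_vertices_child ts j p :
  p \in vertices (nth Leaf ts j) -> j :: p \in vertices (Node ts).
Proof. by move=> pv; rewrite vertices_Node inE (mem_child_vertices 0 pv) orbT. Qed.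

Lemma mem_vertices_prefix t u s : u ++ s \in vertices t -> u \in vertices t.
Proof.
elim: u t => [|a u IHu] [|ts] // /mem_verticesP[//|[j [p [_ [-> <-] pv]]]].
exact: mem_vertices_child (IHu _ pv).
Qed.

Lemma uniq_vertices t : uniq (vertices t).
Proof.
elim/tree_nth_ind: t => [//|ts IHts]; rewrite vertices_Node /=.
apply/andP; split; first by apply/negP => /mem_child_verticesP[j [p [_ ]]].
elim: ts IHts 0 => [|u l IHl] IHts i //=; rewrite cat_uniq; apply/and3P; split.
- by rewrite map_inj_uniq ?(IHts 0) // => x y [].
- apply/hasPn => _ /mem_child_verticesP[j [q [_ -> _]]]; apply/mapP => -[p _ [ij _]].
  by have := leq_addr j i.+1; rewrite ij ltnn.
- by apply: IHl => j; exact: (IHts j.+1).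
Qed.

Lemma mem_child_branchingsP i l b : b \in child_branchings i l -> b.1 = [::] \/
  exists j q, [/\ j < size l, b.1 = (i + j) :: q & (q, b.2) \in branchings (nth Leaf l j)].
Proof.
elim: l i => [|u l IHl] i //=; rewrite !mem_cat => /orP[|/orP[]].
- by case: (i == 0) => //; rewrite inE => /eqP->; left.
- by move=> /mapP[[q k] qk ->]; right; exists 0, q; rewrite addn0.
- move=> /IHl[->|[j [q [jl -> qk]]]]; first by left.
  by right; exists j.+1, q; rewrite addSnnS.
Qed.

Lemma mem_child_branchings_root i l j :
  j < size l -> 0 < i + j -> ([::], i + j) \in child_branchings i l.
Proof.
elim: l i j => [|u l IHl] i [|j] //= jl ij_gt0; rewrite !mem_cat.
  by rewrite addn0 in ij_gt0 *; rewrite eqn0Ngt ij_gt0 mem_head.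
by rewrite -addSnnS IHl ?orbT // addSnnS.
Qed.

Lemma mem_child_branchings_child i l j q k :
  (q, k) \in branchings (nth Leaf l j) -> ((i + j) :: q, k) \in child_branchings i l.
Proof.
elim: l i j => [|u l IHl] i [|j] //= qk; rewrite !mem_cat.
  by rewrite addn0 (map_f (fun b => (i :: b.1, b.2)) qk) orbT.
by rewrite -addSnnS IHl ?orbT.
Qed.

Lemma mem_branching_vertex t b : b \in branchings t -> b.1 \in vertices t.
Proof.
elim/tree_nth_ind: t b => [//|ts IHts] b.
rewrite branchings_Node => /mem_child_branchingsP[->|[j [q [_ -> qk]]]].
  exact: mem_vertices_root.
exact/mem_vertices_child/(IHts j (q, b.2)).
Qed.

Lemma first_branching_mem t v : wf t -> v \in vertices t -> (v, 1) \in branchings t.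
Proof.
elim/tree_nth_ind: t v => [//|ts IHts] v.
rewrite wf_Node => /andP[size_ts wf_ts] /mem_verticesP[->|[j [p [jts -> pv]]]].
  by rewrite branchings_Node (@mem_child_branchings_root 0 ts 1).
rewrite branchings_Node (@mem_child_branchings_child 0 ts j) // IHts //.
exact: (all_nthP Leaf wf_ts).
Qed.

Definition offset (ts : seq tree) (i : nat) : nat := sumn (map nverts (take i ts)).

Lemma offsetS ts j : j < size ts -> offset ts j.+1 = offset ts j + nverts (nth Leaf ts j).
Proof. by move=> jts; rewrite /offset (take_nth Leaf jts) map_rcons sumn_rcons. Qed.

Lemma leq_offset ts : {homo offset ts : i j / i <= j}.
Proof. by move=> i j /subnKC <-; rewrite /offset takeD map_cat sumn_cat leq_addr. Qed.

Lemma offset_leq_sumn ts j : offset ts j <= sumn (map nverts ts).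
Proof. by rewrite /offset -{2}(cat_take_drop j ts) map_cat sumn_cat leq_addr. Qed.

Lemma nverts_Node ts : nverts (Node ts) = (sumn (map nverts ts)).+1.
Proof.
rewrite /nverts vertices_Node /=; congr _.+1.
by elim: ts 0 => [|u l IHl] i //=; rewrite size_cat size_map IHl.
Qed.

Lemma inc_range t v : v \in vertices t -> 0 < inc t v <= nverts t.
Proof.
elim/tree_nth_ind: t v => [//|ts IHts] v /mem_verticesP[->|[j [p [jts -> pv]]]].
  by change (0 < nverts (Node ts) <= nverts (Node ts)); rewrite nverts_Node leqnn.
have /andP[inc_gt0 inc_le] := IHts j p pv.
rewrite /= -/(offset ts j) nverts_Node addn_gt0 inc_gt0 orbT /=.
by apply/leqW/(leq_trans (leq_add (leqnn _) inc_le)); rewrite -offsetS // offset_leq_sumn.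
Qed.

Lemma inc_child_range ts j p : p \in vertices (nth Leaf ts j) ->
  offset ts j < inc (Node ts) (j :: p) <= offset ts j.+1.
Proof.
have [jts pv|/(nth_default Leaf)->//] := ltnP j (size ts).
have /andP[inc_gt0 inc_le] := inc_range pv.
by rewrite /= -/(offset ts j) offsetS // -{1}[offset ts j]addn0 ltn_add2l inc_gt0 leq_add2l.
Qed.

Definition descending (t : tree) (f : seq nat -> nat) : Prop :=
  forall v i, v \in vertices t -> rcons v i \in vertices t -> f (rcons v i) < f v.

Lemma inc_descending t : descending t (inc t).
Proof.
elim/tree_nth_ind: t => [//|ts IHts] [|a v] i.
  move=> _ /mem_verticesP[//|[j [p [jts [-> _] _]]]].
  by rewrite /= -/(offset ts j) -offsetS // nverts_Node ltnS offset_leq_sumn.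
move=> /mem_verticesP[//|[j [p [_ [-> ->] pv]]]].
move=> /mem_verticesP[//|[j' [p' [_ [<- <-] piv]]]].
by rewrite /= ltn_add2l IHts.
Qed.

Lemma on_common_path_nil p : on_common_path [::] p.
Proof. by rewrite /on_common_path prefix0s. Qed.

Lemma on_common_path_sym p q : on_common_path p q = on_common_path q p.
Proof. by rewrite /on_common_path orbC. Qed.

Lemma on_common_path_cons i p q : on_common_path (i :: p) (i :: q) = on_common_path p q.
Proof. by rewrite /on_common_path !prefix_cons eqxx. Qed.

Definition off_path_lt (f : seq nat -> nat) : rel (seq nat * nat) :=
  fun b b' => on_common_path b.1 b'.1 || (f b.1 < f b'.1).

Definition branching_monotone (t : tree) (f : seq nat -> nat) : Prop :=
  forall b b', left_of t b b' -> ~~ on_common_path b.1 b'.1 -> f b.1 < f b'.1.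

Lemma pairwise_branching_monotone t f :
  pairwise (off_path_lt f) (branchings t) -> branching_monotone t f.
Proof.
move=> /(pairwiseP ([::], 0)) f_lt b b' /and3P[bt b't bb'] /negbTE b_off_b'.
have := f_lt _ _ _ _ bb'; rewrite !inE !index_mem !nth_index // => /(_ bt b't).
by rewrite /off_path_lt b_off_b'.
Qed.

Lemma pairwise_child_branchings f i l :
  (forall j, pairwise (off_path_lt (fun p => f ((i + j) :: p))) (branchings (nth Leaf l j))) ->
  (forall j j' p p', j < j' -> p \in vertices (nth Leaf l j) ->
     p' \in vertices (nth Leaf l j') -> f ((i + j) :: p) < f ((i + j') :: p')) ->
  pairwise (off_path_lt f) (child_branchings i l).
Proof.
elim: l i => [|u l IHl] i //= f_child f_across.
rewrite !pairwise_cat; apply/and5P; split.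
- case: (i == 0) => //=; rewrite allrel1l; apply/allP => b _.
  by rewrite /off_path_lt on_common_path_nil.
- by case: (i == 0).
- apply/allrelP => _ b' /mapP[b bu ->]; rewrite /off_path_lt /=.
  case/mem_child_branchingsP => [->|[j [q [_ -> qk]]]].
    by rewrite on_common_path_sym on_common_path_nil.
  apply/orP; right; have := f_across 0 j.+1 b.1 q; rewrite addn0 addSnnS.
  by apply=> //; [exact: mem_branching_vertex bu | exact: mem_branching_vertex qk].
- rewrite pairwise_map; have := f_child 0; rewrite addn0; apply: sub_pairwise.
  by move=> b b'; rewrite /off_path_lt /relpre /= on_common_path_cons.
- apply: IHl => [j | j j' p p' jj']; rewrite !addSnnS; first exact: f_child.
  exact: (f_across j.+1 j'.+1).
Qed.

Lemma inc_branching_monotone t : branching_monotone t (inc t).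
Proof.
apply: pairwise_branching_monotone; elim/tree_nth_ind: t => [//|ts IHts].
rewrite branchings_Node; apply: pairwise_child_branchings => [j | j j' p p' jj' pv p'v].
  by apply: sub_pairwise (IHts j) => b b'; rewrite /off_path_lt /= ltn_add2l.
have /andP[_ inc_le] := inc_child_range pv.
have /andP[inc_gt _] := inc_child_range p'v.
exact: leq_ltn_trans inc_le (leq_ltn_trans (leq_offset ts jj') inc_gt).
Qed.

Definition precedes (t : tree) (v w : seq nat) : bool :=
  ((v != w) && prefix w v)
  || ~~ on_common_path v w && (index (v, 1) (branchings t) < index (w, 1) (branchings t)).

Lemma precedes_total t v w : wf t -> v \in vertices t -> w \in vertices t -> v != w ->
  precedes t v w || precedes t w v.
Proof.
move=> wft vt wt v_neq_w; rewrite /precedes /on_common_path v_neq_w eq_sym v_neq_w.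
case: (prefix w v) => //; case: (prefix v w) => //=.
case: ltngtP => // same_index; case/eqP: v_neq_w.
have := nth_index ([::], 0) (first_branching_mem wft vt).
by rewrite same_index (nth_index _ (first_branching_mem wft wt)) => -[].
Qed.

Section LevelOrder.

Variables (t : tree) (f : seq nat -> nat).
Hypotheses (f_desc : descending t f) (f_mono : branching_monotone t f).

Lemma descending_prefix v s : v ++ s \in vertices t -> s != [::] -> f (v ++ s) < f v.
Proof.
elim/last_ind: s => [//|s x IHs]; rewrite -rcons_cat => vsx _.
have vs : v ++ s \in vertices t by apply: (@mem_vertices_prefix _ _ [:: x]); rewrite cats1.
apply: leq_trans (f_desc vs vsx) _.
have [->|s_neq0] := eqVneq s [::]; first by rewrite cats0.
exact/ltnW/IHs.
Qed.

Hypothesis wft : wf t.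

Lemma precedes_lt v w : v \in vertices t -> w \in vertices t -> precedes t v w -> f v < f w.
Proof.
move=> vt wt /orP[/andP[v_neq_w /prefixP[s v_eq]]|/andP[off vw]].
  rewrite v_eq in vt *; apply: descending_prefix vt _.
  by apply: contraNneq v_neq_w => s0; rewrite v_eq s0 cats0.
by apply: (f_mono (b := (v, 1)) (b' := (w, 1))); rewrite // /left_of !first_branching_mem.
Qed.

Lemma leq_level_precedes v w : v \in vertices t -> w \in vertices t ->
  (f w <= f v) = (w == v) || precedes t w v.
Proof.
move=> vt wt; have [->|w_neq_v] := eqVneq w v; first by rewrite leqnn.
apply/idP/idP => [fwv|/(precedes_lt wt vt)/ltnW //].
have /orP[//|vw] := precedes_total wft wt vt w_neq_v.
by have := precedes_lt vt wt vw; rewrite ltnNge fwv.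
Qed.

Lemma level_injective : {in vertices t &, injective f}.
Proof.
move=> v w vt wt fvw; have := leq_level_precedes vt wt.
rewrite fvw leqnn => /esym/orP[/eqP -> //|wv].
by have := precedes_lt wt vt wv; rewrite fvw ltnn.
Qed.

End LevelOrder.

Section Ranks.

Variables (T : eqType) (s : seq T) (f : T -> nat).
Hypotheses (s_uniq : uniq s) (f_inj : {in s &, injective f}).

Lemma injective_onto_iota :
  {in s, forall x, 1 <= f x <= size s} ->
  forall l, 1 <= l <= size s -> exists2 x, x \in s & f x = l.
Proof.
move=> f_range l l_range.
have fs_uniq : uniq (map f s) by rewrite map_inj_in_uniq.
have fs_sub : {subset map f s <= iota 1 (size s)}.
  by move=> _ /mapP[x xs ->]; rewrite mem_iota add1n ltnS f_range.
have [|_ fs_eq] := uniq_min_size fs_uniq fs_sub; first by rewrite size_iota size_map.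
have /mapP[x xs ->] : l \in map f s by rewrite fs_eq mem_iota add1n ltnS.
by exists x.
Qed.

Lemma count_leq_onto k x :
  {in s, forall y, 1 <= f y <= k} ->
  (forall l, 1 <= l <= k -> exists2 y, y \in s & f y = l) ->
  x \in s -> count (fun y => f y <= f x) s = f x.
Proof.
move=> f_range f_onto xs; rewrite -size_filter; set below := filter _ s.
have below_uniq : uniq (map f below).
  by rewrite map_inj_in_uniq ?filter_uniq // => y z; rewrite !mem_filter => /andP[_ ?] /andP[_ ?]; exact: f_inj.
have below_eq : map f below =i iota 1 (f x).
  move=> l; rewrite mem_iota add1n ltnS; apply/mapP/idP => [[y]|/andP[l_gt0 l_le]].
    by rewrite mem_filter => /andP[fyx ys] ->; have /andP[-> _] := f_range y ys.
  have /andP[_ fx_le] := f_range x xs.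
  have [y ys fy] := f_onto l (introT andP (conj l_gt0 (leq_trans l_le fx_le))).
  by exists y; rewrite // mem_filter fy l_le.
by rewrite -(size_map f) (perm_size (uniq_perm below_uniq (iota_uniq _ _) below_eq)) size_iota.
Qed.

End Ranks.

Lemma inc_level_function t : wf t -> level_function t (inc t) (nverts t).
Proof.
move=> wft; split=> [v /inc_range //||]; last exact: inc_descending.
apply: injective_onto_iota (uniq_vertices t) _ _ => [|v /inc_range //].
exact: level_injective (@inc_descending t) (@inc_branching_monotone t) wft.
Qed.

Lemma level_rank t f k v : wf t -> level_function t f k -> branching_monotone t f ->
  v \in vertices t -> f v = count (fun w => (w == v) || precedes t w v) (vertices t).
Proof.
move=> wft [f_range f_onto f_desc] f_mono vt.
have f_inj := level_injective f_desc f_mono wft.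
rewrite -(count_leq_onto (uniq_vertices t) f_inj f_range f_onto vt).
by apply: eq_in_count => w wt; rewrite (leq_level_precedes f_desc f_mono wft vt wt).
Qed.

Theorem lemma4p6 (t : tree) (lam : seq nat -> nat) :
  increasing_tree t lam ->
  (left_increasing t lam <->
   (forall b b' : seq nat * nat, left_of t b b' ->
      ~~ on_common_path b.1 b'.1 -> lam b.1 < lam b'.1)).
Proof.
move=> [wft [k lam_level]]; split=> [lam_inc | lam_mono].
  move=> b b' bb' b_off_b'; have /and3P[bt b't _] := bb'.
  rewrite !lam_inc ?mem_branching_vertex //.
  exact: inc_branching_monotone bb' b_off_b'.
move=> v vt; rewrite (level_rank wft lam_level lam_mono vt).
by rewrite (level_rank wft (inc_level_function wft) (@inc_branching_monotone t) vt).
Qed.
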